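(* Let $t\ge 2$, let $n_1,\dots,n_t$ be positive integers, and let $G=K_{n_1,\dots,n_t}$ be the complete $t$-partite graph with partite sets $V_1,\dots,V_t$, $|V_i|=n_i$. Let $N_t=\{1,\dots,t\}$ and $f(I)=\sum_{i\in I}n_i$ for $I\subseteq N_t$. Let $p$ be a positive integer with $f(N_t)>p$. Let $D$ be an optimal $\gamma_p(G)$-set, let $\ell=\min\{|D_i|: i\in N_t\setminus I_D\}$ and $A=\{i\in N_t\setminus I_D: |D_i|=\ell+1\}$. Then $|A|=0$ or $2\le |A|\le t-|I_D|-1$.
   Context: A set $S\subseteq V(G)$ is a $p$-dominating set of $G$ if every vertex $v\in V(G)\setminus S$ has at least $p$ neighbors in $S$. The $p$-domination number $\gamma_p(G)$ is the minimum cardinality of a $p$-dominating set of $G$, and a $\gamma_p(G)$-set is a $p$-dominating set of cardinality $\gamma_p(G)$. For $D\subseteq V(G)$ write $D_i=V_i\cap D$ for $i\in N_t$ and $I_D=\{i\in N_t: |D_i|=|V_i|\}$. For a $\gamma_p(G)$-set $D$ with $|I_D|<t$ define $$\mu(D)=\sum_{i\in N_t\setminus I_D}\left|\,|D_i|-\frac{|D|-f(I_D)}{t-|I_D|}\right|.$$ A $\gamma_p(G)$-set $D$ is optimal if: (1) $f(I_D)<p$; (2) $|I_D|\ge |I_S|$ for every $\gamma_p(G)$-set $S$; (3) $\mu(D)\le\mu(S)$ for every $\gamma_p(G)$-set $S$ with $I_S=I_D$. (For an optimal $D$, $N_t\setminus I_D\neq\emptyset$ and every $|D_i|$, $i\in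 N_t\setminus I_D$, equals $\ell$ or $\ell+1$; the paper defines $A$ as the set of those $i$ with $|D_i|=\ell+1$, which is empty when all these values equal $\ell$.) *)

From HB Require Import structures.
From mathcomp Require Import all_boot all_order all_algebra.
Set Implicit Arguments. Unset Strict Implicit. Unset Printing Implicit Defensive.
Import Order.TTheory GRing.Theory Num.Theory.

(* Complete t-partite graph K_{n_1,...,n_t}: partite sets indexed by 'I_t
   (i.e. N_t = {0,...,t-1}), V_i = { (i, j) | j < n i }. *)
Definition vtx (t : nat) (n : 'I_t -> nat) : finType := {i : 'I_t & 'I_(n i)}.

Definition kadj (t : nat) (n : 'I_t -> nat) (u v : vtx n) : bool := tag u != tag v.

Definition p_dominating (t : nat) (n : 'I_t -> nat) (p : nat) (S : {set vtx n}) : Prop :=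
  forall v : vtx n, v \notin S -> p <= #|[set u in S | kadj u v]|.

Definition gamma_p_set (t : nat) (n : 'I_t -> nat) (p : nat) (S : {set vtx n}) : Prop :=
  p_dominating p S /\ (forall S' : {set vtx n}, p_dominating p S' -> #|S| <= #|S'|).

Definition part (t : nat) (n : 'I_t -> nat) (D : {set vtx n}) (i : 'I_t) : {set vtx n} :=
  [set v in D | tag v == i].

Definition fullI (t : nat) (n : 'I_t -> nat) (D : {set vtx n}) : {set 'I_t} :=
  [set i | #|part D i| == n i].

Definition fsum (t : nat) (n : 'I_t -> nat) (I : {set 'I_t}) : nat := \sum_(i in I) n i.

(* mu(D) (rational valued); only meaningful when |I_D| < t *)
Definition mu (t : nat) (n : 'I_t -> nat) (D : {set vtx n}) : rat :=
  \sum_(i in ~: fullI D)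
     `| (#|part D i|%:R - ((#|D|%:R - (fsum n (fullI D))%:R) / (t - #|fullI D|)%:R)) : rat |%R.

Definition optimal (t : nat) (n : 'I_t -> nat) (p : nat) (D : {set vtx n}) : Prop :=
  [/\ gamma_p_set p D,
      fsum n (fullI D) < p,
      (forall S : {set vtx n}, gamma_p_set p S -> #|fullI S| <= #|fullI D|) &
      (forall S : {set vtx n}, gamma_p_set p S -> fullI S = fullI D -> (mu D <= mu S)%R)].

From HB Require Import structures.
From mathcomp Require Import all_boot all_order all_algebra.
From mathcomp Require Import zify lra.
Set Implicit Arguments. Unset Strict Implicit. Unset Printing Implicit Defensive.
Import Order.TTheory GRing.Theory Num.Theory.

(* A set D is p-dominating in the complete multipartite graph iff p + |D_i| <= |D| for
   every non-full part i.  Hence moving a vertex from a largest to a smallest non-full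
   part, when these differ by at least two, gives a gamma_p-set that either has one more
   full part or a strictly smaller mu; so in an optimal set all non-full parts have size
   l or l + 1.  A unique non-full part of size l + 1 could lose a vertex and leave a
   smaller p-dominating set, so |A| <> 1; and the part of size l is not in A. *)

Lemma ltn_sum_at (T : finType) (P : {pred T}) (F G : T -> nat) j :
  j \in P -> (forall i, i \in P -> F i <= G i) -> F j < G j ->
  \sum_(i in P) F i < \sum_(i in P) G i.
Proof.
move=> jP leFG ltFG; rewrite (bigD1 j jP) [ltnRHS](bigD1 j jP) /=.
by rewrite -addSn leq_add // leq_sum // => i /andP[iP _]; apply: leFG.
Qed.

Lemma ltr_sum_pair (R : numDomainType) (T : finType) (P : {pred T}) (F G : T -> R) j k :
  j \in P -> k \in P -> j != k ->
  (forall i, i \in P -> i != j -> i != k -> F i = G i) ->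
  (F j + F k < G j + G k)%R ->
  (\sum_(i in P) F i < \sum_(i in P) G i)%R.
Proof.
move=> jP kP jk eqFG ltFG.
have kPj : (k \in P) && (k != j) by rewrite kP eq_sym jk.
rewrite (bigD1 j jP) (bigD1 j jP) /= (bigD1 k kPj) (bigD1 k kPj) /=.
rewrite !addrA (eq_bigr G) ?ltrD2r // => i /andP[/andP[iP ij] ik].
exact: eqFG.
Qed.

Lemma ltr_dist_transfer (R : realDomainType) (a b c : R) :
  (b < c)%R -> (c < a)%R -> (b + 1 < a)%R ->
  (`|a - 1 - c| + `|b + 1 - c| < `|a - c| + `|b - c|)%R.
Proof.
move=> bc ca ba.
rewrite (@gtr0_norm _ (a - c)) ?subr_gt0 // (@ltr0_norm _ (b - c)) ?subr_lt0 //.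
case: (lerP 0 (a - 1 - c)) => h1; case: (lerP 0 (b + 1 - c)) => h2;
  rewrite ?(ger0_norm h1) ?(ltr0_norm h1) ?(ger0_norm h2) ?(ltr0_norm h2); lra.
Qed.

Section CompleteMultipartite.

Variables (t : nat) (n : 'I_t -> nat).
Implicit Types (p : nat) (D S : {set vtx n}) (i j k : 'I_t) (v x y : vtx n).

Definition partite_set i : {set vtx n} := [set v | tag v == i].

Lemma card_partite_set i : #|partite_set i| = n i.
Proof.
have -> : partite_set i = [set Tagged (fun k => 'I_(n k)) j | j : 'I_(n i)].
  apply/setP => -[k j]; rewrite !inE /=; apply/eqP/imsetP => [<-|[j' _ /(congr1 tag)]//].
  by exists j.
by rewrite card_imset ?card_ord //; apply: eq_from_Tagged.
Qed.

Lemma part_subset_partite_set D i : part D i \subset partite_set i.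
Proof. by apply/subsetP => v; rewrite !inE => /andP[]. Qed.

Lemma part_subset D i : part D i \subset D.
Proof. by apply/subsetP => v; rewrite !inE => /andP[]. Qed.

Lemma notin_fullIP D i : reflect (exists2 v, v \notin D & tag v = i) (i \notin fullI D).
Proof.
have fullE : (i \in fullI D) = (partite_set i \subset D).
  rewrite inE -card_partite_set; apply/idP/idP => [/eqP e | sVD].
    have /eqP <- : part D i == partite_set i.
      by rewrite eqEcard part_subset_partite_set e leqnn.
    exact: part_subset.
  suff -> : part D i = partite_set i by [].
  apply/setP => v; rewrite !inE andb_idl // => vi.
  by apply: (subsetP sVD); rewrite inE.
rewrite fullE; apply: (iffP idP) => [/subsetPn[v]|[v vD tv]].
  by rewrite inE => /eqP tv vD; exists v.
by apply/subsetPn; exists v; rewrite ?inE ?tv.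
Qed.

Lemma in_fullI_part D S i : part S i = part D i -> (i \in fullI S) = (i \in fullI D).
Proof. by rewrite !inE => ->. Qed.

Lemma card_part_sum D : #|D| = fsum n (fullI D) + \sum_(i in ~: fullI D) #|part D i|.
Proof.
have -> : #|D| = \sum_i #|part D i|.
  rewrite -sum1_card (partition_big (fun v : vtx n => tag v) xpredT) //=.
  by apply: eq_bigr => i _; rewrite -sum1_card; apply: eq_bigl => v; rewrite !inE.
rewrite (bigID (mem (fullI D))) /=; congr (_ + _).
  by apply: eq_bigr => i; rewrite inE => /eqP.
by apply: eq_bigl => i; rewrite in_setC.
Qed.

(* A vertex outside [S] in [V_i] is adjacent exactly to [S :\: S_i]. *)
Lemma p_dominatingP p S :
  p_dominating p S <-> forall i, i \notin fullI S -> p + #|part S i| <= #|S|.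
Proof.
have card_adj v : #|[set u in S | kadj u v]| = #|S| - #|part S (tag v)|.
  have -> : [set u in S | kadj u v] = S :\: part S (tag v).
    by apply/setP => u; rewrite !inE /kadj; case: (u \in S); rewrite ?andbF ?andbT.
  by rewrite cardsD (setIidPr (part_subset _ _)).
have le_part i : #|part S i| <= #|S| by rewrite subset_leq_card ?part_subset.
split=> [pS i /notin_fullIP[v vS <-] | pS v vS].
  by have := pS v vS; rewrite card_adj; have := le_part (tag v); lia.
have := pS (tag v) (introT (notin_fullIP _ _) (ex_intro2 _ _ v vS erefl)).
by rewrite card_adj; lia.
Qed.

Lemma p_dominating_compare p (S S' : {set vtx n}) :
  p_dominating p S ->
  (forall i, i \notin fullI S' ->
     exists2 k, k \notin fullI S & #|part S' i| + #|S| <= #|part S k| + #|S'|) ->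
  p_dominating p S'.
Proof.
move=> /p_dominatingP pS cmp; apply/p_dominatingP => i /cmp[k /pS]; lia.
Qed.

Lemma part_setD1 D x k : tag x != k -> part (D :\ x) k = part D k.
Proof.
by move=> xk; apply/setP => v; rewrite !inE; case: eqP => [->|] //=; rewrite (negbTE xk) andbF.
Qed.

Lemma card_part_setD1 D x : x \in D -> #|part D (tag x)| = #|part (D :\ x) (tag x)|.+1.
Proof.
move=> xD; rewrite (cardsD1 x (part D _)) !inE xD eqxx add1n; congr (_.+1).
by apply: eq_card => v; rewrite !inE andbA.
Qed.

Lemma part_setU1 D y k : tag y != k -> part (y |: D) k = part D k.
Proof.
by move=> yk; apply/setP => v; rewrite !inE; case: eqP => [->|] //=; rewrite (negbTE yk) andbF.
Qed.

Lemma card_part_setU1 D y : y \notin D -> #|part (y |: D) (tag y)| = #|part D (tag y)|.+1.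
Proof.
move=> yD; rewrite (cardsD1 y (part _ _)) !inE !eqxx add1n; congr (_.+1).
apply: eq_card => v.
by rewrite !inE; case: (v =P y) => //= ->; rewrite (negbTE yD).
Qed.

Lemma card_setU1D1 D x y : x \in D -> y \notin D -> #|y |: (D :\ x)| = #|D|.
Proof.
by move=> xD yD; rewrite cardsU1 !inE (negbTE yD) andbF /= [#|D|](cardsD1 x) xD.
Qed.

(* If the largest non-full part [D_(tag x)] were strictly larger than all other non-full
   parts, [D :\ x] would still be p-dominating. *)
Lemma gamma_p_set_max_part_repeated p D x :
  gamma_p_set p D -> x \in D -> tag x \notin fullI D ->
  exists2 i, i \notin fullI D & (i != tag x) && (#|part D (tag x)| <= #|part D i|).
Proof.
move=> [pD minD] xD xn.
case: (pickP [pred i | (i \notin fullI D) && (i != tag x)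
                      && (#|part D (tag x)| <= #|part D i|)]).
  by move=> i /andP[/andP[iF ix] le]; exists i; rewrite ?ix.
move=> none.
have pDx : p_dominating p (D :\ x).
  apply: (p_dominating_compare pD) => i idn; exists (tag x) => //.
  case: (eqVneq (tag x) i) => [<-|xi].
    by rewrite (card_part_setD1 xD) [#|D|](cardsD1 x) xD; lia.
  rewrite (in_fullI_part (part_setD1 D xi)) in idn.
  have := none i; rewrite /= idn eq_sym xi /= => /negbT; rewrite -ltnNge.
  by rewrite (part_setD1 D xi) [#|D|](cardsD1 x) xD /=; lia.
by have := minD _ pDx; rewrite [#|D|](cardsD1 x) xD /=; lia.
Qed.

Lemma p_dominating_move p D x y :
  p_dominating p D -> x \in D -> y \notin D -> tag x \notin fullI D ->
  #|part D (tag y)| < #|part D (tag x)| -> p_dominating p (y |: (D :\ x)).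
Proof.
move=> pD xD yD xn lt_yx.
have xy : tag x != tag y by apply: contraTneq lt_yx => ->; rewrite ltnn.
have yDx : y \notin D :\ x by rewrite inE (negbTE yD) andbF.
apply: (p_dominating_compare pD) => k kn; rewrite card_setU1D1 //.
case: (eqVneq (tag x) k) => [<-|xk].
  by exists (tag x); rewrite // part_setU1 1?eq_sym // (card_part_setD1 xD); lia.
case: (eqVneq (tag y) k) => [<-|yk].
  by exists (tag x); rewrite // card_part_setU1 // part_setD1 //; lia.
have e : part (y |: (D :\ x)) k = part D k by rewrite part_setU1 // part_setD1.
by exists k; [rewrite -(in_fullI_part e) | rewrite e].
Qed.

Lemma fullI_move D x y :
  x \in D -> y \notin D -> tag x \notin fullI D -> fullI D \subset fullI (y |: (D :\ x)).
Proof.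
move=> xD yD xn; apply/subsetP => k kf.
have xk : tag x != k by apply: contraNneq xn => ->.
have yk : tag y != k by apply: contraTneq kf => <-; apply/notin_fullIP; exists y.
by rewrite (in_fullI_part (part_setU1 _ yk)) (in_fullI_part (part_setD1 _ xk)).
Qed.

Definition nonfull_mean D : rat :=
  ((\sum_(i in ~: fullI D) #|part D i|)%:R / #|~: fullI D|%:R)%R.

Lemma nonfull_meanE D :
  ((#|D|%:R - (fsum n (fullI D))%:R) / (t - #|fullI D|)%:R)%R = nonfull_mean D.
Proof.
rewrite {1}(card_part_sum D) natrD addrAC subrr add0r.
suff -> : t - #|fullI D| = #|~: fullI D| by [].
by have := cardsC (fullI D); rewrite card_ord; lia.
Qed.

Lemma nonfull_mean_bounds D i j :
  i \notin fullI D -> j \notin fullI D ->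
  (forall k, k \notin fullI D -> #|part D i| <= #|part D k| <= #|part D j|) ->
  #|part D i| < #|part D j| ->
  (#|part D i|%:R < nonfull_mean D < #|part D j|%:R)%R.
Proof.
rewrite -!in_setC => iC jC bounds lt_ij.
have K0 : (0 < #|~: fullI D|%:R :> rat)%R by rewrite ltr0n; apply/card_gt0P; exists i.
rewrite /nonfull_mean ltr_pdivlMr ?ltr_pdivrMr // -!natrM !ltr_nat.
rewrite mulnC -sum_nat_const mulnC -sum_nat_const.
apply/andP; split.
  by apply: (ltn_sum_at jC) => // k; rewrite in_setC => /bounds/andP[].
by apply: (ltn_sum_at iC) => // k; rewrite in_setC => /bounds/andP[].
Qed.

Lemma mu_move_lt D x y :
  x \in D -> y \notin D -> fullI (y |: (D :\ x)) = fullI D ->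
  (forall k, k \notin fullI D -> #|part D (tag y)| <= #|part D k| <= #|part D (tag x)|) ->
  #|part D (tag y)|.+1 < #|part D (tag x)| ->
  (mu (y |: (D :\ x)) < mu D)%R.
Proof.
move=> xD yD eqI bounds gap.
have xy : tag x != tag y by apply: contraTneq gap => ->; rewrite ltnNge leqW.
have yn : tag y \notin fullI D by apply/notin_fullIP; exists y.
have xn : tag x \notin fullI D.
  rewrite -eqI; apply/notin_fullIP; exists x => //.
  by rewrite !inE eqxx /= orbF; apply: contraNneq yD => <-.
have [lt_mean lt_mean'] := andP (nonfull_mean_bounds yn xn bounds (ltnW gap)).
rewrite /mu eqI card_setU1D1 // nonfull_meanE.
apply: (@ltr_sum_pair _ _ _ _ _ (tag x) (tag y)); rewrite ?in_setC //.
  by move=> k _ kx ky; rewrite part_setU1 1?eq_sym // part_setD1 1?eq_sym.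
have yDx : y \notin D :\ x by rewrite inE (negbTE yD) andbF.
have yx : tag y != tag x by rewrite eq_sym.
rewrite (part_setU1 _ yx) (card_part_setU1 yDx) (part_setD1 _ xy).
rewrite (card_part_setD1 xD) in lt_mean' gap *.
have := ltr_dist_transfer lt_mean lt_mean'.
by rewrite -natr1 addrK !natr1 ltr_nat; apply.
Qed.

Lemma optimal_part_le_min_succ p D i0 :
  optimal p D -> i0 \notin fullI D ->
  (forall k, k \notin fullI D -> #|part D i0| <= #|part D k|) ->
  forall k, k \notin fullI D -> #|part D k| <= #|part D i0|.+1.
Proof.
move=> [[pD minD] _ maxI minmu] i0n i0min.
have [j jn jmax] := @arg_maxnP _ i0 (fun k => k \notin fullI D) (fun k => #|part D k|) i0n.
suff le_j : #|part D j| <= #|part D i0|.+1 by move=> k /jmax/leq_trans; apply.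
rewrite leqNgt; apply/negP => gap.
have [x] : exists x, x \in part D j by apply/card_gt0P; lia.
rewrite inE => /andP[xD /eqP tx]; subst j.
have [y yD ty] := notin_fullIP D i0 i0n; subst i0.
have gD' : gamma_p_set p (y |: (D :\ x)).
  split; first by apply: p_dominating_move => //; lia.
  by rewrite card_setU1D1 //; apply: minD.
have eqI : fullI (y |: (D :\ x)) = fullI D.
  apply/eqP; rewrite eq_sym eqEproper fullI_move //=.
  by apply/negP => /proper_card; have := maxI _ gD'; lia.
have := minmu _ gD' eqI; rewrite leNgt mu_move_lt //.
by move=> k kn; rewrite i0min //=; apply: jmax.
Qed.

End CompleteMultipartite.

(* The hypotheses on [t], [n] and [p] only make [G] and its optimal sets meaningful;
   the argument does not use them. *)
Theorem lemma5 (t : nat) (n : 'I_t -> nat) (p : nat) (D : {set vtx n}) (l : nat) :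
  2 <= t ->
  (forall i, 0 < n i) ->
  0 < p ->
  p < fsum n [set: 'I_t] ->
  optimal p D ->
  (exists2 i, i \notin fullI D & #|part D i| = l) ->
  (forall i, i \notin fullI D -> l <= #|part D i|) ->
  let A := [set i | (i \notin fullI D) && (#|part D i| == l.+1)] in
  #|A| = 0 \/ (2 <= #|A| /\ #|A| <= t - #|fullI D| - 1).
Proof.
move=> _ _ _ _ optD [i0 i0n i0l] lmin A.
have le_succ k : k \notin fullI D -> #|part D k| <= l.+1.
  rewrite -i0l; apply: (optimal_part_le_min_succ optD i0n) => // j.
  by rewrite i0l; apply: lmin.
have A_ne1 : #|A| != 1.
  apply/negP => /cards1P[a Aa].
  have : a \in A by rewrite Aa set11.
  rewrite inE => /andP[an /eqP al].
  have [x] : exists x, x \in part D a by apply/card_gt0P; rewrite al.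
  rewrite inE => /andP[xD /eqP tx]; subst a.
  have [gD _ _ _] := optD.
  have [i iF /andP[ix le]] := gamma_p_set_max_part_repeated gD xD an.
  have : i \in A by rewrite inE iF eqn_leq le_succ // -al le.
  by rewrite Aa inE (negbTE ix).
have A_sub : A \subset (~: fullI D) :\ i0.
  apply/subsetP => k; rewrite !inE => /andP[kn /eqP kl]; rewrite kn andbT.
  by apply/eqP => ki0; move: kl; rewrite ki0 i0l; lia.
have := subset_leq_card A_sub; have := cardsD1 i0 (~: fullI D); rewrite in_setC i0n /=.
have := cardsC (fullI D); rewrite card_ord; move: A_ne1.
move: #|A| #|fullI D| #|~: fullI D| #|~: fullI D :\ i0| => a b c d; lia.
Qed.
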